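(* On a three-letter alphabet: (1) there exists a $1$-regular word of length $n\ge 1$ if and only if $n=3k$ for some integer $k\ge 2$; (2) there exists a $2$-regular word of length $n\ge 1$ if and only if $n=9k$ for some integer $k\ge 2$.
   Context: For a word $u=u_1\cdots u_m$ over an alphabet $\mathcal A$ with $b$ letters and an integer $r\ge -1$, $u$ is $r$-regular if for every $k=0,1,\dots,r$ the sum $\sum_{1\le t\le m,\ u_t=c} t^k$ is the same for all letters $c\in\mathcal A$ (a letter not occurring contributes $0$). Here $b=3$. *)

From mathcomp Require Import all_boot.
Set Implicit Arguments. Unset Strict Implicit. Unset Printing Implicit Defensive.

(* Words over an alphabet with b letters: sequences over 'I_b.
   Positions are 1-indexed: the letter at position t (1 <= t <= m) is
   nth _ u (t-1). *)

Definition power_sum (b : nat) (u : seq 'I_b) (c : 'I_b) (k : nat) : nat :=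
  \sum_(i < size u | nth c u i == c) (i.+1) ^ k.

Definition regular (b : nat) (r : nat) (u : seq 'I_b) : Prop :=
  forall k : nat, k <= r ->
    forall c d : 'I_b, power_sum u c k = power_sum u d k.

From mathcomp Require Import all_boot zify.
Set Implicit Arguments. Unset Strict Implicit. Unset Printing Implicit Defensive.

(* Write S(u, c, k) for the k-th power sum of the positions of the letter c
   in u.  Both directions rest on two facts about power sums, valid over any
   alphabet:
   - Shifting all positions by L turns S(v, c, k) into the binomial
     combination sum_j C(k, j) L^(k-j) S(v, c, j); hence the concatenation of
     two r-regular words is r-regular, and from r-regular words of lengths
     2L and 3L one builds r-regular words of every length kL, k >= 2.
   - Summing S(u, c, k) over all b letters gives sum_(t <= |u|) t^k; hence an
     r-regular word satisfies b * S(u, c, k) = sum_t t^k for k <= r.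
   For b = 3 the moment k = 0 gives 3 | n, and the moment k = 2 together with
   6 * sum t^2 = n(n+1)(2n+1) gives 9 | n.  Lengths 3 and 9 are excluded by
   an exhaustive search (a reflected decision procedure run by vm_compute),
   and explicit words of lengths 6, 9 (resp. 18, 27) provide the bases of
   the constructions. *)

(* An enumeration of 'I_n that reduces under vm_compute (the library's
   [enum] goes through [insub], which is blocked by opaque proofs). *)
Fixpoint ords n : seq 'I_n :=
  if n is n'.+1 then ord0 :: map (lift ord0) (ords n') else [::].

Lemma mem_ords n (c : 'I_n) : c \in ords n.
Proof.
elim: n c => [|n IH] c; first by case: c.
by case: (unliftP ord0 c) => [j ->|->]; rewrite inE ?eqxx // map_f ?orbT.
Qed.

Lemma constant_mapP (T R : eqType) (f : T -> R) (s : seq T) :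
  reflect {in s &, forall x y, f x = f y} (constant (map f s)).
Proof.
case: s => [|x s] /=; first by left.
rewrite all_map; apply: (iffP allP) => [fx | feq y ys].
  have fxE w : w \in x :: s -> f w = f x by rewrite inE => /predU1P[->|/fx/eqP].
  by move=> y z /fxE -> /fxE ->.
by apply/eqP/feq; rewrite ?inE ?ys ?eqxx ?orbT.
Qed.

Section PowerSums.
Variable b : nat.
Implicit Types (u v : seq 'I_b) (c d : 'I_b).

Fixpoint shifted_sum u (off : nat) c (k : nat) : nat :=
  if u is x :: u' then (x == c) * off.+1 ^ k + shifted_sum u' off.+1 c k else 0.

(* The big-operator form, with an arbitrary offset so that induction goes
   through. *)
Lemma shifted_sum_big u off c k :
  \sum_(i < size u | nth c u i == c) (off + i).+1 ^ k = shifted_sum u off c k.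
Proof.
elim: u off => [|x u IH] off /=; first by rewrite big_ord0.
rewrite big_mkcond big_ord_recl -big_mkcond /= -IH.
rewrite addn0; congr (_ + _); first by case: (x == c); rewrite ?mul1n ?mul0n.
by apply: eq_bigr => i _; rewrite /bump /= add1n addSnnS.
Qed.

Lemma power_sum_shifted u c k : power_sum u c k = shifted_sum u 0 c k.
Proof. exact: (shifted_sum_big u 0 c k). Qed.

Lemma shifted_sum_cat u v off c k :
  shifted_sum (u ++ v) off c k = shifted_sum u off c k + shifted_sum v (off + size u) c k.
Proof.
elim: u off => [|x u IH] off /=; first by rewrite addn0.
by rewrite IH addSnnS addnA.
Qed.

Lemma shifted_sum_shift v L off c k :
  shifted_sum v (L + off) c k =
  \sum_(j < k.+1) 'C(k, j) * L ^ (k - j) * shifted_sum v off c j.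
Proof.
elim: v off => [|x v IH] off /=; first by rewrite big1 // => j _; rewrite muln0.
rewrite -addnS IH expnDn big_distrr -big_split /=.
by apply: eq_bigr => j _; rewrite mulnDr [in RHS]mulnCA -!mulnA.
Qed.

(* Every position carries exactly one letter, so summing over all letters
   gives the power sum of all positions. *)
Lemma sum_shifted_sum u off k :
  \sum_(c < b) shifted_sum u off c k = \sum_(i < size u) (off + i).+1 ^ k.
Proof.
elim: u off => [|x u IH] off /=; first by rewrite big_ord0 big1.
rewrite big_split /= IH big_ord_recl addn0 -big_distrl /=.
have -> : \sum_(c < b) (x == c) = 1.
  rewrite (bigD1 x) //= eqxx big1 // => c cx.
  by rewrite eq_sym (negbTE cx).
rewrite mul1n; congr (_ + _).
by apply: eq_bigr => i _; rewrite /bump /= add1n addSnnS.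
Qed.

Lemma regular_moment r u k c :
  regular r u -> k <= r -> b * power_sum u c k = \sum_(i < size u) i.+1 ^ k.
Proof.
move=> ru kr; transitivity (\sum_(d < b) shifted_sum u 0 d k).
  rewrite (eq_bigr (fun=> power_sum u c k)) ?sum_nat_const ?card_ord // => d _.
  by rewrite -power_sum_shifted; exact: ru.
exact: sum_shifted_sum.
Qed.

(* Regularity is preserved by concatenation: the shifted moments of the
   second word are combinations of moments that agree on all letters. *)
Lemma regular_cat r u v : regular r u -> regular r v -> regular r (u ++ v).
Proof.
move=> ru rv k kr c d; rewrite !power_sum_shifted !shifted_sum_cat add0n.
rewrite -[size u]addn0 !shifted_sum_shift -!power_sum_shifted (ru k kr c d).
congr (_ + _); apply: eq_bigr => j _.
by rewrite -!power_sum_shifted (rv j _ c d) // (leq_trans _ kr) // -ltnS.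
Qed.

Lemma regular_multiples r L u2 u3 :
  size u2 = 2 * L -> size u3 = 3 * L -> regular r u2 -> regular r u3 ->
  forall k, 2 <= k -> exists u, size u = k * L /\ regular r u.
Proof.
move=> s2 s3 r2 r3 k; elim/ltn_ind: k => -[|[|[|[|k]]]] IH // _.
- by exists u2.
- by exists u3.
have [u [su ru]] := IH k.+2 (leqW (ltnSn _)) isT.
exists (u ++ u2); split; last exact: regular_cat.
by rewrite size_cat su s2 -mulnDl addn2.
Qed.

Definition regularb r u : bool :=
  all (fun k => constant [seq shifted_sum u 0 c k | c <- ords b]) (iota 0 r.+1).

Lemma regularP r u : reflect (regular r u) (regularb r u).
Proof.
apply: (iffP allP) => [reg_k k kr c d | reg_u k].
  have /reg_k/constant_mapP eq_k : k \in iota 0 r.+1 by rewrite mem_iota add0n ltnS kr.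
  by rewrite !power_sum_shifted; apply: eq_k; apply: mem_ords.
rewrite mem_iota add0n ltnS => /andP[_ kr].
by apply/constant_mapP => c d _ _; rewrite -!power_sum_shifted; apply: reg_u.
Qed.

Fixpoint words n : seq (seq 'I_b) :=
  if n is n'.+1 then [seq x :: w | x <- ords b, w <- words n'] else [:: [::]].

Lemma mem_words u : u \in words (size u).
Proof. by elim: u => [|x u IH] //=; apply: allpairs_f; rewrite ?mem_ords. Qed.

Lemma no_regular_of_size r n :
  all (fun u => ~~ regularb r u) (words n) -> forall u, size u = n -> ~ regular r u.
Proof.
move=> /allP none u su /regularP ru.
by have := none u; rewrite -su mem_words ru => /(_ isT).
Qed.
End PowerSums.

Lemma no_regular1_of_size3 (u : seq 'I_3) : size u = 3 -> ~ regular 1 u.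
Proof. by apply: no_regular_of_size; vm_compute. Qed.

Lemma no_regular2_of_size9 (u : seq 'I_3) : size u = 9 -> ~ regular 2 u.
Proof. by apply: no_regular_of_size; vm_compute. Qed.

Lemma sum_ones n : \sum_(i < n) i.+1 ^ 0 = n.
Proof. by rewrite (eq_bigr (fun=> 1)) // sum1_card card_ord. Qed.

Lemma sum_squares n : 6 * \sum_(i < n) i.+1 ^ 2 = n * n.+1 * (2 * n).+1.
Proof. by elim: n => [|n IH]; rewrite ?big_ord0 // big_ord_recr mulnDr IH /=; nia. Qed.

(* If the square sum up to 3p is divisible by 3 then so is p: indeed
   6 * sum = 3p(3p+1)(6p+1), and (3p+1)(6p+1) is prime to 3. *)
Lemma three_dvd_of_sum_squares p : 3 %| \sum_(i < 3 * p) i.+1 ^ 2 -> 3 %| p.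
Proof.
move=> /dvdnP[s sum_eq]; have := sum_squares (3 * p); rewrite sum_eq.
rewrite /dvdn (divn_eq p 3); move: (p %/ 3) (ltn_pmod p (isT : 0 < 3)).
by case: (p %% 3) => [|[|[|]]] // q _ /=; nia.
Qed.

Lemma regular_count3 r (u : seq 'I_3) : regular r u -> size u = 3 * power_sum u ord0 0.
Proof. by move=> ru; rewrite (regular_moment ord0 ru) ?sum_ones. Qed.

Lemma regular1_length (u : seq 'I_3) :
  regular 1 u -> 0 < size u -> exists k, 2 <= k /\ size u = 3 * k.
Proof.
move=> ru u_gt0; have size_u := regular_count3 ru.
exists (power_sum u ord0 0); split => //.
case: (power_sum u ord0 0) size_u => [|[|k]] size_u //; first by rewrite size_u in u_gt0.
by case: (no_regular1_of_size3 size_u ru).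
Qed.

Lemma regular2_length (u : seq 'I_3) :
  regular 2 u -> 0 < size u -> exists k, 2 <= k /\ size u = 9 * k.
Proof.
move=> ru u_gt0; have size_u := regular_count3 ru.
have /dvdnP[k p_eq] : 3 %| power_sum u ord0 0.
  apply: three_dvd_of_sum_squares; rewrite -size_u -(regular_moment ord0 ru) //.
  exact: dvdn_mulr.
have {}size_u : size u = 9 * k by rewrite size_u p_eq mulnCA mulnC.
exists k; split => //.
case: k size_u {p_eq} => [|[|k]] size_u //; first by rewrite size_u in u_gt0.
by case: (no_regular2_of_size9 size_u ru).
Qed.

Definition word3 (s : seq nat) : seq 'I_3 := [seq nth ord0 (ords 3) i | i <- s].

Lemma regular1_exists k : 2 <= k -> exists u : seq 'I_3, size u = 3 * k /\ regular 1 u.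
Proof.
move=> k_ge2; rewrite mulnC.
apply: (@regular_multiples _ _ _ (word3 [:: 0; 1; 2; 2; 1; 0])
                                 (word3 [:: 0; 1; 2; 2; 0; 1; 1; 2; 0])) => //;
  by apply/regularP; vm_compute.
Qed.

Lemma regular2_exists k : 2 <= k -> exists u : seq 'I_3, size u = 9 * k /\ regular 2 u.
Proof.
move=> k_ge2; rewrite mulnC.
apply: (@regular_multiples _ _ _
    (word3 [:: 0; 1; 2; 0; 1; 2; 2; 2; 1; 1; 0; 0; 1; 0; 0; 2; 2; 1])
    (word3 [:: 0; 0; 1; 1; 2; 2; 2; 2; 0; 1; 1; 2; 0; 1; 1; 2; 1; 0; 0;
               0; 0; 2; 0; 2; 1; 2; 1])) => //;
  by apply/regularP; vm_compute.
Qed.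

Theorem mainTheorem12 :
  (forall n : nat, 1 <= n ->
     ((exists u : seq 'I_3, size u = n /\ regular 1 u) <->
      (exists k : nat, 2 <= k /\ n = 3 * k)))
  /\
  (forall n : nat, 1 <= n ->
     ((exists u : seq 'I_3, size u = n /\ regular 2 u) <->
      (exists k : nat, 2 <= k /\ n = 9 * k))).
Proof.
split=> n n_gt0; split.
- by move=> [u [size_u ru]]; rewrite -size_u in n_gt0 *; apply: regular1_length.
- by move=> [k [k_ge2 ->]]; apply: regular1_exists.
- by move=> [u [size_u ru]]; rewrite -size_u in n_gt0 *; apply: regular2_length.
- by move=> [k [k_ge2 ->]]; apply: regular2_exists.
Qed.
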